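(* Let $A_{1}\in \mathbb{C}^{m\times n}$, $b_{1}\in \mathbb{C}^{m}$, $A_{2}\in \mathbb{C}^{k\times n}$ with $r(A_{2})=k\geq 1$, and $b_{2}\in \mathbb{C}^{k}$. Define the subspaces \[ \mathcal{X}=P_{N(A_{2})}R(A_{1}^{*})=N(A_{2})\cap (N(A_{2})\cap N(A_{1}))^{\perp},\qquad \mathcal{Y}=N(A_{1})\oplus (A_{1}^{*}A_{1})^{\dagger}\big(N(A_{1})+N(A_{2})\big)^{\perp}. \] Then $\mathcal{X}$ and $\mathcal{Y}$ are complementary subspaces of $\mathbb{C}^n$ with \[ P_{\mathcal{X},\mathcal{Y}}=I-P_{\mathcal{Y},\mathcal{X}}=\big(A_1 (I-A_{2}^{\dagger}A_{2})\big)^{\dagger}A_1, \] and the following hold: 1. Every solution of the problem $\min_{x\in \mathbb{C}^{n}}\|A_{1}x-b_{1}\|^{2}$ subject to $A_{2}x=b_{2}$ lies in the set \[ \Xi =\{A_{1}^{\dagger}b_{1}+P_{\mathcal{Y},\mathcal{X}}(A_{2}^{\dagger}b_{2}-A_{1}^{\dagger}b_{1})+z:\ z\in N(A_{1})\cap N(A_{2})\}. \] 2. The element of $\Xi$ with the smallest Euclidean norm is $\xi:=A_{1}^{\dagger}b_{1}+P_{\mathcal{Y},\mathcal{X}}(A_{2}^{\dagger}b_{2}-A_{1}^{\dagger}b_{1})$. 3. For any $y\in\mathbb{C}^n$, the solution of $\min_{x\in\Xi}\|x-y\|$ is $\psi(y):=\xi+P_{N(A_1)\cap N(A_2)}\,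y$.
   Context: $A^{*}$ is the conjugate transpose, $A^{\dagger}$ the Moore–Penrose inverse, $r(A)$, $R(A)$, $N(A)$ the rank, range and null space of $A$; $\|\cdot\|$ is the Euclidean norm. For a subspace $S$, $S^{\perp}$ is its orthogonal complement, $P_S$ the orthogonal projector onto $S$, and for a matrix $B$, $BS=\{Bs:s\in S\}$. For complementary subspaces $L,M$ of $\mathbb{C}^n$, $P_{L,M}$ is the oblique projector onto $L$ along $M$ (the idempotent matrix with range $L$ and null space $M$). $\oplus$ denotes direct sum. *)

(* The field of complex numbers is modelled as R[i] for an
   arbitrary R : realType (mathcomp-real-closed's complex.v). *)
From HB Require Import structures.
From mathcomp Require Import all_boot all_order all_algebra.
From mathcomp Require Import reals.
From mathcomp Require Export complex.
From Stdlib Require Import ClassicalEpsilon.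
Set Implicit Arguments. Unset Strict Implicit. Unset Printing Implicit Defensive.
Import Order.TTheory GRing.Theory Num.Theory.
Local Open Scope ring_scope.

Section Defs.
Variable C : numClosedFieldType.

Definition ctr {p q : nat} (A : 'M[C]_(p, q)) : 'M[C]_(q, p) :=
  (map_mx Num.conj A)^T.

Definition penrose {p q : nat} (A : 'M[C]_(p, q)) (X : 'M[C]_(q, p)) : Prop :=
  [/\ A *m X *m A = A, X *m A *m X = X,
      ctr (A *m X) = A *m X & ctr (X *m A) = X *m A].

Definition mpinv {p q : nat} (A : 'M[C]_(p, q)) : 'M[C]_(q, p) :=
  epsilon (inhabits 0) (penrose A).

Definition subsp (n : nat) := 'cV[C]_n -> Prop.

Definition nullsp {p q : nat} (A : 'M[C]_(p, q)) : subsp q :=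
  fun x => A *m x = 0.
Definition rangesp {p q : nat} (A : 'M[C]_(p, q)) : subsp p :=
  fun y => exists x, y = A *m x.
Definition orthc {n : nat} (S : subsp n) : subsp n :=
  fun y => forall x, S x -> ctr x *m y = 0.
Definition capsp {n : nat} (S T : subsp n) : subsp n := fun x => S x /\ T x.
Definition addsp {n : nat} (S T : subsp n) : subsp n :=
  fun x => exists s t, [/\ S s, T t & x = s + t].
Definition imgsp {p q : nat} (B : 'M[C]_(p, q)) (S : subsp q) : subsp p :=
  fun y => exists s, S s /\ y = B *m s.
Definition eqsp {n : nat} (S T : subsp n) : Prop := forall x, S x <-> T x.

Definition complementary {n : nat} (S T : subsp n) : Prop :=
  (forall x, exists s t, [/\ S s, T t & x = s + t]) /\
  (forall x, S x -> T x -> x = 0).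

Definition direct_sum {n : nat} (S T : subsp n) : Prop :=
  forall x, S x -> T x -> x = 0.

Definition is_oproj {n : nat} (L M : subsp n) (P : 'M[C]_n) : Prop :=
  [/\ P *m P = P, eqsp (rangesp P) L & eqsp (nullsp P) M].
Definition oproj {n : nat} (L M : subsp n) : 'M[C]_n :=
  epsilon (inhabits 0) (is_oproj L M).
Definition oproj_orth {n : nat} (S : subsp n) : 'M[C]_n := oproj S (orthc S).

Definition vnorm {n : nat} (v : 'cV[C]_n) : C :=
  sqrtC (\sum_(i < n) `|v i 0| ^+ 2).

End Defs.

From HB Require Import structures.
From mathcomp Require Import all_boot all_order all_algebra.
From mathcomp Require Import reals complex.
From Stdlib Require Import ClassicalEpsilon.
Import Order.TTheory GRing.Theory Num.Theory.
Set Implicit Arguments. Unset Strict Implicit. Unset Printing Implicit Defensive.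
Local Open Scope ring_scope.

(* With P = I - A2^+ A2, the orthogonal projector onto N(A2), and B = A1 P,
   the matrix Q = B^+ A1 is idempotent with range P R(A1^* ) = X and null
   space Y, so Q = P_{X,Y} and I - Q = P_{Y,X}.  Substituting, xi becomes
   A2^+ b2 + B^+ (b1 - A1 A2^+ b2).  This vector satisfies A2 xi = b2, its
   residual A1 xi - b1 is orthogonal to A1 N(A2), and xi itself is orthogonal
   to N(A1) ∩ N(A2).  All three claims then follow from Pythagoras: the
   constrained residual only grows off xi + (N(A1) ∩ N(A2)), the norm on that
   affine space is minimal at xi, and the nearest point to y is reached by
   adding the orthogonal projection of y onto N(A1) ∩ N(A2). *)

Section ConjugateTranspose.
Variable C : numClosedFieldType.
Implicit Types p q r : nat.

Lemma ctrM p q r (A : 'M[C]_(p, q)) (B : 'M[C]_(q, r)) :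
  ctr (A *m B) = ctr B *m ctr A.
Proof. by rewrite /ctr map_mxM trmx_mul. Qed.

Lemma ctrK p q (A : 'M[C]_(p, q)) : ctr (ctr A) = A.
Proof. by apply/matrixP=> i j; rewrite /ctr !mxE conjCK. Qed.

Lemma ctrD p q (A B : 'M[C]_(p, q)) : ctr (A + B) = ctr A + ctr B.
Proof. by apply/matrixP=> i j; rewrite /ctr !mxE rmorphD. Qed.

Lemma ctrN p q (A : 'M[C]_(p, q)) : ctr (- A) = - ctr A.
Proof. by apply/matrixP=> i j; rewrite /ctr !mxE rmorphN. Qed.

Lemma ctrB p q (A B : 'M[C]_(p, q)) : ctr (A - B) = ctr A - ctr B.
Proof. by rewrite ctrD ctrN. Qed.

Lemma ctr0 p q : ctr (0 : 'M[C]_(p, q)) = 0.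
Proof. by apply/matrixP=> i j; rewrite /ctr !mxE rmorph0. Qed.

Lemma ctr1 p : ctr (1%:M : 'M[C]_p) = 1%:M.
Proof. by apply/matrixP=> i j; rewrite /ctr !mxE rmorph_nat eq_sym. Qed.

Lemma ctr_mul_eq0 p q (A : 'M[C]_(p, q)) : ctr A *m A = 0 -> A = 0.
Proof.
move=> AA0; apply/matrixP=> i j.
have := congr1 (fun M : 'M[C]_q => M j j) AA0; rewrite !mxE => /eqP.
under eq_bigr => l _ do rewrite /ctr !mxE mulrC -normCK.
rewrite psumr_eq0; last by move=> l _; rewrite exprn_ge0.
move/allP/(_ i (mem_index_enum _)) => /=.
by rewrite sqrf_eq0 normr_eq0 => /eqP ->.
Qed.

Lemma mul_ctr_eq0 p q (A : 'M[C]_(p, q)) : A *m ctr A = 0 -> A = 0.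
Proof. by move=> AA0; rewrite -[A]ctrK (@ctr_mul_eq0 _ _ (ctr A)) ?ctrK ?ctr0. Qed.

Lemma ctr_mul_sym0 p q (u v : 'M[C]_(p, q)) : ctr u *m v = 0 -> ctr v *m u = 0.
Proof. by move=> uv0; rewrite -[u]ctrK -ctrM uv0 ctr0. Qed.

Lemma gram_mul_eq0 p q r (A : 'M[C]_(p, q)) (V : 'M[C]_(q, r)) :
  ctr A *m A *m V = 0 -> A *m V = 0.
Proof.
move=> AAV0; apply: ctr_mul_eq0.
by rewrite ctrM -mulmxA (mulmxA (ctr A)) AAV0 mulmx0.
Qed.

Lemma ctr_invmx r (N : 'M[C]_r) :
  ctr N = N -> N \in unitmx -> ctr (invmx N) = invmx N.
Proof.
move=> hermN uN.
have E : ctr (invmx N) *m N = 1%:M by rewrite -{2}hermN -ctrM mulmxV // ctr1.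
by rewrite -[ctr _]mulmx1 -(mulmxV uN) mulmxA E mul1mx.
Qed.

End ConjugateTranspose.

Section EuclideanNorm.
Variables (C : numClosedFieldType) (n : nat).
Implicit Types u v : 'cV[C]_n.

Definition sqnorm v : C := (ctr v *m v) 0 0.

Lemma sqnorm_ge0 v : 0 <= sqnorm v.
Proof.
rewrite /sqnorm mxE; apply: sumr_ge0 => l _.
by rewrite /ctr !mxE mulrC -normCK exprn_ge0.
Qed.

Lemma sqnorm_gt0 v : v != 0 -> 0 < sqnorm v.
Proof.
move=> v_neq0; rewrite lt_def sqnorm_ge0 andbT; apply: contra_neq v_neq0 => vv0.
by apply: ctr_mul_eq0; apply/matrixP => i j; rewrite !ord1 [RHS]mxE.
Qed.

Lemma sqnorm_le0 v : sqnorm v <= 0 -> v = 0.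
Proof.
by move=> le0; apply/eqP; apply: contraTT le0 => /sqnorm_gt0 /lt_geF ->.
Qed.

Lemma vnormE v : vnorm v = sqrtC (sqnorm v).
Proof.
rewrite /vnorm /sqnorm mxE; congr sqrtC; apply: eq_bigr => l _.
by rewrite /ctr !mxE mulrC -normCK.
Qed.

Lemma vnorm_sqr v : vnorm v ^+ 2 = sqnorm v.
Proof. by rewrite vnormE sqrtCK. Qed.

Lemma sqnorm_orthD u v : ctr u *m v = 0 -> sqnorm (u + v) = sqnorm u + sqnorm v.
Proof.
move=> uv0; rewrite /sqnorm ctrD mulmxDl !mulmxDr uv0 (ctr_mul_sym0 uv0).
by rewrite addr0 add0r [LHS]mxE.
Qed.

Lemma vnorm_lt_orthD u v : ctr u *m v = 0 -> v != 0 -> vnorm u < vnorm (u + v).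
Proof.
move=> uv0 v_neq0; rewrite !vnormE ltr_sqrtC ?qualifE /= ?sqnorm_ge0 //.
by rewrite sqnorm_orthD // ltrDl sqnorm_gt0.
Qed.

End EuclideanNorm.

Section MoorePenrose.
Variable C : numClosedFieldType.
Implicit Types p q r : nat.

Lemma penrose_full_rank_factor p q r (F : 'M[C]_(p, r)) (G : 'M[C]_(r, q)) :
  row_full F -> row_free G -> exists X, penrose (F *m G) X.
Proof.
move=> /row_fullP[F' F'F] freeG.
pose M := G *m ctr G; pose N := ctr F *m F.
have hermM : ctr M = M by rewrite /M ctrM ctrK.
have hermN : ctr N = N by rewrite /N ctrM ctrK.
have uM : M \in unitmx.
  rewrite -row_free_unit; apply: inj_row_free => x xM0.
  have /mul_ctr_eq0 xG0 : (x *m G) *m ctr (x *m G) = 0.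
    by rewrite ctrM mulmxA -(mulmxA x) -/M xM0 mul0mx.
  by apply: (row_free_inj freeG); rewrite mul0mx.
have uN : N \in unitmx.
  rewrite -row_free_unit; apply: inj_row_free => x xN0.
  have /ctr_mul_eq0 Fx0 : ctr (F *m ctr x) *m (F *m ctr x) = 0.
    by rewrite ctrM ctrK -mulmxA (mulmxA (ctr F)) -/N mulmxA xN0 mul0mx.
  have x0 : ctr x = 0 by rewrite -[ctr x]mul1mx -F'F -mulmxA Fx0 mulmx0.
  by rewrite -[x]ctrK x0 ctr0.
exists (ctr G *m invmx M *m invmx N *m ctr F).
have AX : F *m G *m (ctr G *m invmx M *m invmx N *m ctr F) = F *m invmx N *m ctr F.
  by rewrite -!mulmxA (mulmxA G) -/M (mulmxA M) mulmxV // mul1mx.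
have XA : ctr G *m invmx M *m invmx N *m ctr F *m (F *m G) = ctr G *m invmx M *m G.
  by rewrite -!mulmxA (mulmxA (ctr F)) -/N (mulmxA (invmx N)) mulVmx // mul1mx.
split.
- by rewrite AX -!mulmxA (mulmxA (ctr F)) -/N (mulmxA (invmx N)) mulVmx // mul1mx.
- by rewrite XA -!mulmxA (mulmxA G) -/M (mulmxA (invmx M)) mulVmx // mul1mx.
- by rewrite AX !ctrM ctrK ctr_invmx // mulmxA.
- by rewrite XA !ctrM ctrK ctr_invmx // mulmxA.
Qed.

Lemma mpinvP p q (A : 'M[C]_(p, q)) : penrose A (mpinv A).
Proof.
apply: epsilon_spec; rewrite -(mulmx_base A).
exact: penrose_full_rank_factor (col_base_full A) (row_base_free A).
Qed.

Section Penrose.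
Variables (p q : nat) (A : 'M[C]_(p, q)).
Local Notation Ap := (mpinv A).

Lemma mul_mpinv_mul : A *m Ap *m A = A. Proof. by case: (mpinvP A). Qed.
Lemma mpinv_mul_mpinv : Ap *m A *m Ap = Ap. Proof. by case: (mpinvP A). Qed.
Lemma herm_mul_mpinv : ctr (A *m Ap) = A *m Ap. Proof. by case: (mpinvP A). Qed.
Lemma herm_mpinv_mul : ctr (Ap *m A) = Ap *m A. Proof. by case: (mpinvP A). Qed.

Lemma mpinv_ctrl : Ap = ctr A *m ctr Ap *m Ap.
Proof. by rewrite -ctrM herm_mpinv_mul mpinv_mul_mpinv. Qed.

Lemma mpinv_ctrr : Ap = Ap *m ctr Ap *m ctr A.
Proof. by rewrite -mulmxA -ctrM herm_mul_mpinv mulmxA mpinv_mul_mpinv. Qed.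

Lemma ctr_mpinvl : ctr A = Ap *m A *m ctr A.
Proof. by rewrite -herm_mpinv_mul -ctrM mulmxA mul_mpinv_mul. Qed.

Lemma ctr_mpinvr : ctr A = ctr A *m A *m Ap.
Proof. by rewrite -mulmxA -herm_mul_mpinv -ctrM mul_mpinv_mul. Qed.

Lemma nullsp_ctr_mpinv (z : 'cV[C]_q) : A *m z = 0 -> ctr z *m Ap = 0.
Proof.
move=> Az0; rewrite -mpinv_mul_mpinv (mulmxA (ctr z)) -herm_mpinv_mul -ctrM.
by rewrite -mulmxA Az0 mulmx0 ctr0 !mul0mx.
Qed.

Lemma mul_mpinv_row_free : row_free A -> A *m Ap = 1%:M.
Proof. by move=> freeA; apply: (row_free_inj freeA); rewrite mul1mx mul_mpinv_mul. Qed.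

End Penrose.
End MoorePenrose.

Section Projectors.
Variables (C : numClosedFieldType) (n : nat).
Implicit Types (L M S : subsp C n) (P H : 'M[C]_n).

Lemma is_oproj_uniq L M P P' : is_oproj L M P -> is_oproj L M P' -> P = P'.
Proof.
move=> [PP PL PM] [PP' P'L P'M].
have PP'x (x : 'cV_n) : P *m x = P' *m x.
  have [w Pw] : rangesp P (P' *m x) by apply/PL/P'L; exists x.
  have PP'xx : P *m (P' *m x) = P' *m x by rewrite Pw mulmxA PP.
  have : P *m (x - P' *m x) = 0.
    by apply/PM/P'M; rewrite /nullsp mulmxBr mulmxA PP' subrr.
  by rewrite mulmxBr PP'xx => /eqP; rewrite subr_eq0 => /eqP.
apply/matrixP=> i j.
have := congr1 (fun v : 'cV_n => v i 0) (PP'x (delta_mx j 0)).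
by rewrite -!colE !mxE.
Qed.

Lemma oprojE L M P : is_oproj L M P -> oproj L M = P.
Proof.
move=> LMP; apply: (is_oproj_uniq _ LMP).
by apply: epsilon_spec; exists P.
Qed.

Lemma is_oproj_compl L M P : is_oproj L M P -> is_oproj M L (1%:M - P).
Proof.
move=> [PP PL PM]; split.
- by rewrite mulmxBl mul1mx mulmxBr mulmx1 PP subrr subr0.
- move=> x; split.
  + by move=> [w ->]; apply/PM; rewrite /nullsp mulmxA mulmxBr mulmx1 PP subrr mul0mx.
  + by move=> /PM Px0; exists x; rewrite mulmxBl mul1mx Px0 subr0.
- move=> x; split.
  + rewrite /nullsp mulmxBl mul1mx => /eqP; rewrite subr_eq0 => /eqP Px.
    by apply/PL; exists x.
  + by move=> /PL [w ->]; rewrite /nullsp mulmxA mulmxBl mul1mx PP subrr mul0mx.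
Qed.

Lemma is_oproj_complementary L M P : is_oproj L M P -> complementary L M.
Proof.
move=> [PP PL PM]; split=> [x|x /PL [w ->] /PM]; last by rewrite /nullsp mulmxA PP.
exists (P *m x), ((1%:M - P) *m x); split.
- by apply/PL; exists x.
- by apply/PM; rewrite /nullsp mulmxA mulmxBr mulmx1 PP subrr mul0mx.
- by rewrite mulmxBl mul1mx addrC subrK.
Qed.

Lemma orthc_addsp_l S T w : T 0 -> orthc (addsp S T) w -> orthc S w.
Proof. by move=> T0 STw x Sx; apply: STw; exists x, 0; rewrite addr0. Qed.

Lemma orthc_addsp_r S T w : S 0 -> orthc (addsp S T) w -> orthc T w.
Proof. by move=> S0 STw x Tx; apply: STw; exists 0, x; rewrite add0r. Qed.

Lemma herm_idem_orthc S H :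
  ctr H = H -> H *m H = H -> (forall x, S (H *m x)) ->
  forall y, orthc S y -> H *m y = 0.
Proof.
move=> hermH HH SH y Sy; apply: ctr_mul_eq0.
have := Sy _ (SH y); rewrite ctrM hermH => E.
by rewrite -mulmxA (mulmxA H) HH mulmxA E.
Qed.

Lemma oproj_orthE S H :
  ctr H = H -> H *m H = H -> (forall x, S x -> H *m x = x) ->
  (forall x, S (H *m x)) -> oproj_orth S = H.
Proof.
move=> hermH HH HS SH; apply: oprojE; split => // [x|y]; split.
- by move=> [w ->].
- by move=> Sx; exists x; rewrite HS.
- by move=> Hy0 x Sx; rewrite -(HS _ Sx) ctrM hermH -mulmxA Hy0 mulmx0.
- exact: herm_idem_orthc.
Qed.

End Projectors.

Section NullProjector.
Variables (C : numClosedFieldType) (p q : nat) (A : 'M[C]_(p, q)).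

Definition nullproj : 'M[C]_q := 1%:M - mpinv A *m A.

Lemma herm_nullproj : ctr nullproj = nullproj.
Proof. by rewrite /nullproj ctrB ctr1 herm_mpinv_mul. Qed.

Lemma nullproj_idem : nullproj *m nullproj = nullproj.
Proof.
by rewrite /nullproj mulmxBl mul1mx mulmxBr mulmx1 mulmxA mpinv_mul_mpinv subrr subr0.
Qed.

Lemma mul_nullproj : A *m nullproj = 0.
Proof. by rewrite /nullproj mulmxBr mulmx1 mulmxA mul_mpinv_mul subrr. Qed.

Lemma nullsp_nullproj (x : 'cV[C]_q) : nullsp A (nullproj *m x).
Proof. by rewrite /nullsp mulmxA mul_nullproj mul0mx. Qed.

Lemma nullprojK (x : 'cV[C]_q) : A *m x = 0 -> nullproj *m x = x.
Proof. by move=> Ax0; rewrite /nullproj mulmxBl mul1mx -mulmxA Ax0 mulmx0 subr0. Qed.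

Lemma nullproj_orthc w : orthc (nullsp A) w -> nullproj *m w = 0.
Proof. exact/herm_idem_orthc/nullsp_nullproj/nullproj_idem/herm_nullproj. Qed.

Lemma oproj_orth_nullsp : oproj_orth (nullsp A) = nullproj.
Proof.
exact/oproj_orthE/nullsp_nullproj/nullprojK/nullproj_idem/herm_nullproj.
Qed.

Lemma mul_mpinv_orthc w : orthc (nullsp (ctr A)) w -> A *m mpinv A *m w = w.
Proof.
pose K := 1%:M - A *m mpinv A.
have hermK : ctr K = K by rewrite /K ctrB ctr1 herm_mul_mpinv.
have KK : K *m K = K.
  by rewrite /K mulmxBl mul1mx mulmxBr mulmx1 mulmxA mul_mpinv_mul subrr subr0.
have nullK x : nullsp (ctr A) (K *m x).
  by rewrite /nullsp mulmxA /K mulmxBr mulmx1 mulmxA -ctr_mpinvr subrr mul0mx.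
move=> /(herm_idem_orthc hermK KK nullK).
by rewrite /K mulmxBl mul1mx => /eqP; rewrite subr_eq0 => /eqP.
Qed.

End NullProjector.

Lemma nullsp_col_mx (C : numClosedFieldType) m1 m2 n
    (A1 : 'M[C]_(m1, n)) (A2 : 'M[C]_(m2, n)) u :
  nullsp (col_mx A1 A2) u <-> capsp (nullsp A1) (nullsp A2) u.
Proof.
rewrite /nullsp /capsp mul_col_mx; split.
- by move/eqP; rewrite col_mx_eq0 => /andP [/eqP -> /eqP ->].
- by move=> [-> ->]; apply/eqP; rewrite col_mx_eq0 !eqxx.
Qed.

Section ConstrainedLeastSquares.
Variables (C : numClosedFieldType) (m n k : nat).
Variables (A1 : 'M[C]_(m, n)) (A2 : 'M[C]_(k, n)).

Local Notation P := (nullproj A2).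
Local Notation B := (A1 *m nullproj A2).
Local Notation Bp := (mpinv (A1 *m nullproj A2)).
Local Notation Q := (mpinv (A1 *m nullproj A2) *m A1).
Local Notation G := (ctr A1 *m A1).
Local Notation N1 := (nullsp A1).
Local Notation N2 := (nullsp A2).
Local Notation X := (imgsp (nullproj A2) (rangesp (ctr A1))).
Local Notation Y := (addsp N1 (imgsp (mpinv G) (orthc (addsp N1 N2)))).

Lemma ctr_B : ctr B = P *m ctr A1.
Proof. by rewrite ctrM herm_nullproj. Qed.

Lemma nullproj_mpinvB : P *m Bp = Bp.
Proof.
have BpE : Bp = P *m (ctr A1 *m ctr Bp *m Bp) by rewrite {1}mpinv_ctrl ctr_B !mulmxA.
by rewrite {1}BpE mulmxA nullproj_idem -BpE.
Qed.

Lemma mul_A2_mpinvB : A2 *m Bp = 0.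
Proof. by rewrite -nullproj_mpinvB mulmxA mul_nullproj mul0mx. Qed.

Lemma mul_A1_mpinvB : A1 *m Bp = B *m Bp.
Proof. by rewrite -mulmxA nullproj_mpinvB. Qed.

Lemma Q_idem : Q *m Q = Q.
Proof. by rewrite mulmxA -(mulmxA Bp A1) mul_A1_mpinvB mulmxA mpinv_mul_mpinv. Qed.

Lemma rangesp_Q x : rangesp Q x <-> X x.
Proof.
split=> [[w ->]|[s [[w ->] ->]]].
  exists (ctr A1 *m (ctr Bp *m Bp *m A1 *m w)); split.
    by exists (ctr Bp *m Bp *m A1 *m w).
  by rewrite {1}mpinv_ctrl ctr_B !mulmxA.
exists (P *m (ctr A1 *m w)).
have E : Bp *m A1 *m (P *m ctr A1) = Bp *m B *m ctr B.
  by rewrite ctr_B -!mulmxA (mulmxA P P) nullproj_idem.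
by rewrite !mulmxA -(mulmxA (Bp *m A1)) E -ctr_mpinvl ctr_B.
Qed.


Lemma herm_gram : ctr G = G.
Proof. by rewrite ctrM ctrK. Qed.

Lemma nullsp_Q x : Q *m x = 0 <-> Y x.
Proof.
split=> [Qx0|[s [t [s1 [w [w_orth ->]] ->]]]].
  have PGx0 : P *m (G *m x) = 0.
    have : ctr B *m (A1 *m x) = 0.
      by rewrite ctr_mpinvr -!mulmxA (mulmxA Bp) Qx0 !mulmx0.
    by rewrite ctr_B !mulmxA.
  exists (nullproj G *m x), (mpinv G *m (G *m x)); split.
  - by rewrite /nullsp mulmxA (gram_mul_eq0 (mul_nullproj G)) mul0mx.
  - exists (G *m x); split => // _ [s [t [s1 t2 ->]]].
    have Gs0 : ctr s *m (G *m x) = 0.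
      by rewrite mulmxA -herm_gram -ctrM -mulmxA s1 mulmx0 ctr0 mul0mx.
    have GxE : G *m x = mpinv A2 *m A2 *m (G *m x).
      by move: PGx0; rewrite /nullproj mulmxBl mul1mx => /eqP; rewrite subr_eq0 => /eqP.
    by rewrite ctrD mulmxDl Gs0 add0r GxE !mulmxA nullsp_ctr_mpinv // !mul0mx.
  - by rewrite /nullproj mulmxBl mul1mx -!mulmxA subrK.
have GGpw : G *m mpinv G *m w = w.
  apply: mul_mpinv_orthc; rewrite herm_gram => z /gram_mul_eq0 z1.
  exact: orthc_addsp_l (mulmx0 _ _) w_orth _ z1.
rewrite mulmxDr -mulmxA s1 mulmx0 add0r mpinv_ctrr ctr_B -!mulmxA.
rewrite (mulmxA (ctr A1)) (mulmxA G) GGpw nullproj_orthc ?mulmx0 //.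
exact: orthc_addsp_r (mulmx0 _ _) w_orth.
Qed.

Lemma X_capE x : X x <-> capsp N2 (orthc (capsp N2 N1)) x.
Proof.
split=> [[s [[w ->] ->]]|[x2 x_orth]].
  split=> [|z [z2 z1]]; first exact: nullsp_nullproj.
  rewrite mulmxA -herm_nullproj -ctrM (nullprojK z2) mulmxA -ctrM.
  by rewrite [A1 *m z]z1 ctr0 mul0mx.
apply/rangesp_Q; exists x.
have A1x : A1 *m x = B *m x by rewrite -mulmxA nullprojK.
set u := x - Q *m x.
have u2 : A2 *m u = 0 by rewrite /u mulmxBr x2 !mulmxA mul_A2_mpinvB !mul0mx subrr.
have u1 : A1 *m u = 0.
  rewrite /u mulmxBr !mulmxA mul_A1_mpinvB -(mulmxA (B *m Bp)) A1x mulmxA.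
  by rewrite mul_mpinv_mul subrr.
have ux0 : ctr u *m x = 0 by apply: x_orth.
have uQx0 : ctr u *m (Q *m x) = 0.
  rewrite !mulmxA nullsp_ctr_mpinv ?mul0mx //.
  by rewrite -mulmxA nullprojK.
have : u = 0 by apply: ctr_mul_eq0; rewrite {2}/u mulmxBr ux0 uQx0 subrr.
by move/eqP; rewrite subr_eq0 => /eqP.
Qed.

Lemma Y_direct : direct_sum N1 (imgsp (mpinv G) (orthc (addsp N1 N2))).
Proof.
move=> x x1 [w [_ xE]]; apply: ctr_mul_eq0.
rewrite {2}xE mulmxA nullsp_ctr_mpinv ?mul0mx //.
by rewrite -mulmxA x1 mulmx0.
Qed.

Lemma is_oproj_Q : is_oproj X Y Q.
Proof. by split; [exact: Q_idem | exact: rangesp_Q | exact: nullsp_Q]. Qed.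

Lemma oproj_orth_capsp : oproj_orth (capsp N1 N2) = nullproj (col_mx A1 A2).
Proof.
apply: oproj_orthE; [exact: herm_nullproj | exact: nullproj_idem | |].
- by move=> x /nullsp_col_mx; apply: nullprojK.
- by move=> x; apply/nullsp_col_mx/nullsp_nullproj.
Qed.

Variables (b1 : 'cV[C]_m) (b2 : 'cV[C]_k).

Definition clsq_sol := mpinv A2 *m b2 + Bp *m (b1 - A1 *m (mpinv A2 *m b2)).

Lemma clsq_solE :
  mpinv A1 *m b1 + (1%:M - Q) *m (mpinv A2 *m b2 - mpinv A1 *m b1) = clsq_sol.
Proof.
have BpA1Ap : Bp *m A1 *m mpinv A1 = Bp.
  rewrite {1}mpinv_ctrr -!mulmxA ctr_B -mulmxA (mulmxA (ctr A1)) -ctr_mpinvr.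
  by rewrite -ctr_B mulmxA -mpinv_ctrr.
rewrite mulmxBl mul1mx (mulmxBr Q) (mulmxA Q (mpinv A1)) BpA1Ap.
rewrite -(mulmxA Bp) -mulmxBr.
by rewrite -[- (Bp *m _)]mulmxN opprB addrCA addrA subrK.
Qed.

Lemma clsq_sol_feasible : row_free A2 -> A2 *m clsq_sol = b2.
Proof.
move=> freeA2; rewrite mulmxDr mulmxA mul_mpinv_row_free // mul1mx.
by rewrite mulmxA mul_A2_mpinvB mul0mx addr0.
Qed.

Lemma clsq_sol_orth (z : 'cV[C]_n) : capsp N1 N2 z -> ctr z *m clsq_sol = 0.
Proof.
move=> [z1 z2]; have Bz0 : B *m z = 0 by rewrite -mulmxA nullprojK.
by rewrite mulmxDr !mulmxA !nullsp_ctr_mpinv // !mul0mx addr0.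
Qed.

Lemma clsq_resid_orth (v : 'cV[C]_n) :
  A2 *m v = 0 -> ctr (A1 *m v) *m (A1 *m clsq_sol - b1) = 0.
Proof.
set c := b1 - A1 *m (mpinv A2 *m b2) => v2.
have -> : A1 *m clsq_sol - b1 = B *m Bp *m c - c.
  rewrite /clsq_sol mulmxDr (mulmxA A1 Bp) mul_A1_mpinvB /c.
  by rewrite opprB addrA [_ + B *m Bp *m _]addrC.
rewrite -(nullprojK v2) mulmxA ctrM -(mulmxA (ctr v)) mulmxBr.
by rewrite (mulmxA (ctr B)) (mulmxA (ctr B) B) -ctr_mpinvr subrr mulmx0.
Qed.

Lemma clsq_optimal_diff x :
  row_free A2 -> A2 *m x = b2 ->
  (forall x', A2 *m x' = b2 ->
     vnorm (A1 *m x - b1) ^+ 2 <= vnorm (A1 *m x' - b1) ^+ 2) ->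
  capsp N1 N2 (x - clsq_sol).
Proof.
move=> freeA2 x2 x_opt; have sol2 := clsq_sol_feasible freeA2.
have v2 : A2 *m (x - clsq_sol) = 0 by rewrite mulmxBr x2 sol2 subrr.
split=> //; apply: sqnorm_le0; move: (x_opt _ sol2); rewrite !vnorm_sqr.
have -> : A1 *m x - b1 = A1 *m (x - clsq_sol) + (A1 *m clsq_sol - b1).
  by rewrite addrA -mulmxDr subrK.
by rewrite sqnorm_orthD ?clsq_resid_orth // -[leRHS]add0r lerD2r.
Qed.

Lemma clsq_sol_min_norm z :
  capsp N1 N2 z -> z != 0 -> vnorm clsq_sol < vnorm (clsq_sol + z).
Proof. by move=> z12; apply/vnorm_lt_orthD/ctr_mul_sym0/clsq_sol_orth. Qed.

Lemma clsq_sol_nearest y z :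
  let H := nullproj (col_mx A1 A2) in
  capsp N1 N2 z -> z != H *m y ->
  vnorm (clsq_sol + H *m y - y) < vnorm (clsq_sol + z - y).
Proof.
move=> H z12 zHy; set u := z - H *m y.
have u12 : capsp N1 N2 u.
  have /nullsp_col_mx[Hy1 Hy2] := nullsp_nullproj (col_mx A1 A2) y.
  by case: z12 => z1 z2; split; rewrite /nullsp mulmxBr ?z1 ?z2 ?Hy1 ?Hy2 subrr.
have -> : clsq_sol + z - y = clsq_sol + H *m y - y + u.
  by rewrite /u [RHS]addrAC addrACA subrr addr0.
apply: vnorm_lt_orthD; last by rewrite subr_eq0.
apply: ctr_mul_sym0; rewrite mulmxBr mulmxDr clsq_sol_orth // add0r.
have Hu : H *m u = u by apply/nullprojK/nullsp_col_mx.
have hermH : ctr H = H by apply: herm_nullproj.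
by rewrite mulmxA -hermH -ctrM Hu subrr.
Qed.

End ConstrainedLeastSquares.

Theorem corollary4 (R : realType) (m n k : nat)
    (A1 : 'M[R[i]]_(m, n)) (b1 : 'cV[R[i]]_m)
    (A2 : 'M[R[i]]_(k, n)) (b2 : 'cV[R[i]]_k) :
  \rank A2 = k -> (1 <= k)%N ->
  let X : subsp _ n := imgsp (oproj_orth (nullsp A2)) (rangesp (ctr A1)) in
  let Y : subsp _ n :=
    addsp (nullsp A1)
      (imgsp (mpinv (ctr A1 *m A1))
         (orthc (addsp (nullsp A1) (nullsp A2)))) in
  let PYX := oproj Y X in
  let Xi : subsp _ n := fun x => exists z,
      [/\ nullsp A1 z, nullsp A2 z &
          x = mpinv A1 *m b1 + PYX *m (mpinv A2 *m b2 - mpinv A1 *m b1) + z] in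
  let xi := mpinv A1 *m b1 + PYX *m (mpinv A2 *m b2 - mpinv A1 *m b1) in
  eqsp X (capsp (nullsp A2) (orthc (capsp (nullsp A2) (nullsp A1)))) /\
  direct_sum (nullsp A1)
    (imgsp (mpinv (ctr A1 *m A1)) (orthc (addsp (nullsp A1) (nullsp A2)))) /\
  complementary X Y /\
  oproj X Y = 1%:M - PYX /\
  1%:M - PYX = mpinv (A1 *m (1%:M - mpinv A2 *m A2)) *m A1 /\
  (forall x, A2 *m x = b2 ->
     (forall x', A2 *m x' = b2 ->
        vnorm (A1 *m x - b1) ^+ 2 <= vnorm (A1 *m x' - b1) ^+ 2) ->
     Xi x) /\
  (Xi xi /\ forall x, Xi x -> x <> xi -> vnorm xi < vnorm x) /\
  (forall y, let psi := xi + oproj_orth (capsp (nullsp A1) (nullsp A2)) *m y in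
     Xi psi /\ forall x, Xi x -> x <> psi -> vnorm (psi - y) < vnorm (x - y)).
Proof.
move=> rkA2 _ X Y PYX Xi xi.
have freeA2 : row_free A2 by rewrite /row_free rkA2.
have XE : X = imgsp (nullproj A2) (rangesp (ctr A1)).
  by rewrite /X oproj_orth_nullsp.
have XYQ : is_oproj X Y (mpinv (A1 *m nullproj A2) *m A1).
  by rewrite XE; exact: is_oproj_Q.
have PYXE : PYX = 1%:M - mpinv (A1 *m nullproj A2) *m A1.
  exact/oprojE/is_oproj_compl.
have xiE : xi = clsq_sol A1 A2 b1 b2 by rewrite /xi PYXE clsq_solE.
have XiE x : Xi x <-> exists2 z, capsp (nullsp A1) (nullsp A2) z & x = xi + z.
  by split=> [[z [z1 z2 ->]]|[z [z1 z2] ->]]; exists z.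
split; first by move=> x; rewrite XE; exact: X_capE.
split; first exact: Y_direct.
split; first exact: is_oproj_complementary XYQ.
split; first by rewrite (oprojE XYQ) PYXE opprB addrC subrK.
split; first by rewrite PYXE opprB addrC subrK.
split.
  move=> x x2 x_opt; apply/XiE; exists (x - xi); last by rewrite addrC subrK.
  by rewrite xiE; exact: clsq_optimal_diff.
split.
  split=> [|x /XiE[z z12 ->] xz].
    by apply/XiE; exists 0; rewrite ?addr0 //; split; exact: mulmx0.
  rewrite xiE; apply: clsq_sol_min_norm z12 _.
  by apply/eqP => z0; apply: xz; rewrite z0 addr0.
move=> y psi; rewrite /psi oproj_orth_capsp.
split=> [|x /XiE[z z12 ->] xz].
  apply/XiE; exists (nullproj (col_mx A1 A2) *m y) => //.
  exact/nullsp_col_mx/nullsp_nullproj.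
rewrite xiE; apply: clsq_sol_nearest z12 _.
by apply/eqP => zE; apply: xz; rewrite zE xiE.
Qed.
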